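(* Let $C$ be an $[n,k,d]$ and $C'$ an $[n',k',d']$ linear code over $\mathbb{F}_q$, let $x \in C \times C'$, $e \in \mathbb{F}_q^{n \times n'}$ and $y = x + e$. Perform the column decoding of $y$ described in the context, obtaining $\hat{x}$, the reliability weights $\alpha_1,\dots,\alpha_{n'}$ and the set $I_E$. Suppose that $$2\sum_{j=1}^{n'} \min\{ w(e_j), d\} < d\, d'$$ (in particular this holds whenever $2w(e) < d d'$). Then $$\sum_{j \in [n'] \setminus I_E} \alpha_j \;-\; \sum_{j \in I_E} \alpha_j \;>\; n' - d',$$ and consequently, for every row index $i \in [n]$, $$\sum_{j=1}^{n'} \alpha_j \,(-1)^{w(\hat{x}_{ij} - x_{ij})} \;>\; n' - d',$$ where $w(\hat{x}_{ij} - x_{ij})$ is $0$ if $\hat{x}_{ij} = x_{ij}$ and $1$ otherwise.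
   Context: The product code $C \times C'$ consists of the matrices $G^T X G'$ for $X \in \mathbb{F}_q^{k\times k'}$, where $G, G'$ are generator matrices of $C, C'$; equivalently its elements are the $n \times n'$ matrices all of whose columns lie in $C$ and all of whose rows lie in $C'$. For a matrix $b$, $b_j$ denotes its $j$-th column and $b^i$ its $i$-th row; $w(\cdot)$ is Hamming weight. Let $t = \lfloor (d-1)/2 \rfloor$. Column decoding: each column $y_j$ ($j \in [n']$) is decoded by a bounded-distance decoder for $C$, which returns the unique codeword of $C$ at Hamming distance at most $t$ from $y_j$ if one exists, and otherwise declares failure. If decoding succeeds with output $\hat{x}_j$, set $\hat{e}_j = y_j - \hat{x}_j$ and $\alpha_j = (d - 2 w(\hat{e}_j))/d$; if it fails, set $\hat{x}_j = y_j$ and $\alpha_j = 0$. Let $\hat{x}$ be the matrix with columns $\hat{x}_j$. Let $I_E \subseteq [n']$ be the set of indices $j$ for which column decoding failed or $\hat{x}_j \neq x_j$. *)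

From HB Require Import structures.
From mathcomp Require Import all_boot all_order all_algebra all_fingroup all_field.
Set Implicit Arguments. Unset Strict Implicit. Unset Printing Implicit Defensive.
Import Order.TTheory GRing.Theory Num.Theory.
Local Open Scope ring_scope.

(* Linear codes of length n over a finite field F are represented by a
   generator matrix G : 'M[F]_(k, n); codewords are the row vectors in the
   row space of G. *)

Section Codes.
Variable F : finFieldType.

Definition wt (n : nat) (v : 'rV[F]_n) : nat := #|[set i | v 0 i != 0]|.

Definition in_code (k n : nat) (G : 'M[F]_(k, n)) (c : 'rV[F]_n) : bool :=
  (c <= G)%MS.

(* G generates an [n,k,d] linear code: k linearly independent generators,
   minimum distance (= minimum weight of a nonzero codeword) equal to d. *)
Definition is_code (k n d : nat) (G : 'M[F]_(k, n)) : Prop :=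
  [/\ \rank G = k,
      (exists2 c, in_code G c & (c != 0) && (wt c == d)) &
      (forall c, in_code G c -> c != 0 -> (d <= wt c)%N)].

Definition colv (n n' : nat) (y : 'M[F]_(n, n')) (j : 'I_n') : 'rV[F]_n :=
  (col j y)^T.

(* Product code C x C': all columns in C and all rows in C'. *)
Definition in_product_code (k n k' n' : nat) (G : 'M[F]_(k, n))
  (G' : 'M[F]_(k', n')) (x : 'M[F]_(n, n')) : bool :=
  [forall j, in_code G (colv x j)] && [forall i, in_code G' (row i x)].

(* Bounded-distance decoder with radius t: the codeword within distance t
   (unique when t = floor((d-1)/2)), or None (failure). *)
Definition bdd_decode (k n : nat) (G : 'M[F]_(k, n)) (t : nat)
  (v : 'rV[F]_n) : option 'rV[F]_n :=
  [pick c : 'rV[F]_n | in_code G c && (wt (v - c) <= t)%N].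

Definition dec_col (k n : nat) (G : 'M[F]_(k, n)) (d : nat) (v : 'rV[F]_n)
  : 'rV[F]_n :=
  match bdd_decode G (d.-1 %/ 2) v with Some c => c | None => v end.

Definition rel_weight (k n : nat) (G : 'M[F]_(k, n)) (d : nat) (v : 'rV[F]_n)
  : rat :=
  match bdd_decode G (d.-1 %/ 2) v with
  | Some c => ((d%:Q - 2%:Q * (wt (v - c))%:Q) / d%:Q)
  | None => 0
  end.

Definition dec_mx (k n n' : nat) (G : 'M[F]_(k, n)) (d : nat)
  (y : 'M[F]_(n, n')) : 'M[F]_(n, n') :=
  \matrix_(i < n, j < n') (dec_col G d (colv y j)) 0 i.

Definition err_set (k n n' : nat) (G : 'M[F]_(k, n)) (d : nat)
  (x y : 'M[F]_(n, n')) : {set 'I_n'} :=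
  [set j | match bdd_decode G (d.-1 %/ 2) (colv y j) with
           | None => true
           | Some c => c != colv x j
           end].

End Codes.

From HB Require Import structures.
From mathcomp Require Import all_boot all_order all_algebra all_fingroup all_field.
From mathcomp Require Import zify ring lra.
Set Implicit Arguments.
Unset Strict Implicit.
Unset Printing Implicit Defensive.

Import Order.TTheory GRing.Theory Num.Theory.
Local Open Scope ring_scope.

(* Column j contributes +alpha_j if it is decoded correctly and -alpha_j
   otherwise, and in every case at least 1 - 2 min(w(e_j), d)/d: a wrong
   decoding c of x_j + e_j is a codeword different from x_j, so
   d <= w(c - x_j) <= w(e_j) + w(x_j + e_j - c), while a failure means
   that x_j itself is not within t of x_j + e_j, i.e. w(e_j) > t.
   Summing over the columns and using the weight hypothesis gives more than
   n' - d'.  For the second claim, a correct column contributes exactly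
   alpha_j to every row, and an erroneous one at least -alpha_j. *)

Definition reliability (d s : nat) : rat := (d%:Q - 2%:Q * s%:Q) / d%:Q.

Lemma reliability_le_opp d m s :
  (d <= m + s)%N -> reliability d m <= - reliability d s.
Proof.
move=> le_d_ms; rewrite /reliability -[- (_ / _)]mulNr.
apply: ler_wpM2r; first by rewrite invr_ge0.
have : d%:Q <= m%:Q + s%:Q by rewrite -natrD ler_nat.
lra.
Qed.

Lemma reliability_le0 d m : (d <= 2 * m)%N -> reliability d m <= 0.
Proof.
move=> le_d_2m; rewrite /reliability mulr_le0_ge0 ?invr_ge0 //.
by rewrite subr_le0 -natrM ler_nat.
Qed.

Lemma reliability_ge0 d s : (2 * s <= d)%N -> 0 <= reliability d s.
Proof.
by move=> le_2s_d; rewrite /reliability divr_ge0 // subr_ge0 -natrM ler_nat.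
Qed.

Lemma sum_reliability_gt (I : finType) (d d' : nat) (m : I -> nat) :
  (2 * \sum_i m i < d * d')%N ->
  #|I|%:Q - d'%:Q < \sum_i reliability d (m i).
Proof.
move=> lt_sum; have d_gt0 : (0 < d)%N by case: d lt_sum.
have d_pos : 0 < d%:Q by rewrite ltr0n.
have -> : \sum_i reliability d (m i) = \sum_i (1 - 2%:Q / d%:Q * (m i)%:Q).
  apply: eq_bigr => i _; rewrite /reliability mulrBl divff ?gt_eqF //.
  by rewrite mulrAC.
rewrite sumrB sumr_const -mulr_sumr -sumMz -pmulrn ltrD2l ltrN2.
by rewrite mulrAC ltr_pdivrMr // -!intrM ltr_int; lia.
Qed.

Section Codewords.
Variable F : finFieldType.

Lemma wtN n (v : 'rV[F]_n) : wt (- v) = wt v.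
Proof. by apply: eq_card => i; rewrite !inE mxE oppr_eq0. Qed.

Lemma leq_wtD n (u v : 'rV[F]_n) : (wt (u + v) <= wt u + wt v)%N.
Proof.
apply: leq_trans (leq_card_setU _ _); apply: subset_leq_card.
apply/subsetP => i; rewrite !inE mxE.
by case: (eqVneq (u 0 i) 0) => [->|]; rewrite ?add0r.
Qed.

Lemma leq_wtB n (u v : 'rV[F]_n) : (wt (u - v) <= wt u + wt v)%N.
Proof. by rewrite -(wtN v) leq_wtD. Qed.

Lemma in_codeB k n (G : 'M[F]_(k, n)) u v :
  in_code G u -> in_code G v -> in_code G (u - v).
Proof. by move=> Gu Gv; rewrite /in_code addmx_sub // -scaleN1r scalemx_sub. Qed.

End Codewords.

Section ColumnDecoding.
Variables (F : finFieldType) (k n d : nat) (G : 'M[F]_(k, n)).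

Definition decoding_error (v w : 'rV[F]_n) : bool :=
  if bdd_decode G (d.-1 %/ 2) w is Some c then c != v else true.

Lemma bdd_decode_Some w c :
  bdd_decode G (d.-1 %/ 2) w = Some c ->
  in_code G c /\ (2 * wt (w - c) <= d)%N.
Proof. by rewrite /bdd_decode; case: pickP => // c' /andP[? ?] [<-]; split; lia. Qed.

Lemma rel_weight_ge0 w : 0 <= rel_weight G d w.
Proof.
rewrite /rel_weight; case E: bdd_decode => [c|] //.
by apply: reliability_ge0; have [_] := bdd_decode_Some E; lia.
Qed.

Lemma dec_col_correct v w : ~~ decoding_error v w -> dec_col G d w = v.
Proof. by rewrite /decoding_error /dec_col; case: bdd_decode => // c /negbNE/eqP. Qed.

Hypothesis HC : is_code d G.
Variables (v e : 'rV[F]_n).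
Hypothesis Gv : in_code G v.

Lemma rel_weight_correct :
  bdd_decode G (d.-1 %/ 2) (v + e) = Some v ->
  rel_weight G d (v + e) = reliability d (minn (wt e) d).
Proof.
move=> dec_v; have [_] := bdd_decode_Some dec_v; rewrite /rel_weight dec_v.
by rewrite addrAC subrr add0r => le_2e_d; congr reliability; lia.
Qed.

Lemma rel_weight_wrong c :
  bdd_decode G (d.-1 %/ 2) (v + e) = Some c -> c != v ->
  reliability d (minn (wt e) d) <= - rel_weight G d (v + e).
Proof.
move=> dec_c c_neq_v; rewrite /rel_weight dec_c.
apply: reliability_le_opp.
have [Gc _] := bdd_decode_Some dec_c.
have : (d <= wt (c - v))%N by case: HC => _ _; apply; rewrite ?in_codeB ?subr_eq0.
have -> : c - v = e - (v + e - c) by apply/rowP => i; rewrite !mxE; ring.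
move/leq_trans/(_ (leq_wtB _ _)); lia.
Qed.

Lemma rel_weight_failure :
  bdd_decode G (d.-1 %/ 2) (v + e) = None ->
  reliability d (minn (wt e) d) <= - rel_weight G d (v + e).
Proof.
rewrite /rel_weight /bdd_decode; case: pickP => // no_codeword _.
have := no_codeword v; rewrite Gv addrAC subrr add0r /= => /negbT.
by rewrite -ltnNge oppr0 => lt_t_e; apply: reliability_le0; lia.
Qed.

Lemma reliability_le_signed_rel_weight :
  reliability d (minn (wt e) d) <=
  (if decoding_error v (v + e) then - rel_weight G d (v + e)
   else rel_weight G d (v + e)).
Proof.
rewrite /decoding_error.
case dec: bdd_decode => [c|]; last exact: rel_weight_failure.
have [c_eq_v | c_neq_v] := eqVneq c v; last exact: rel_weight_wrong dec c_neq_v.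
by rewrite rel_weight_correct // dec c_eq_v.
Qed.

End ColumnDecoding.

Theorem mainTheorem2 (F : finFieldType) (n k d n' k' d' : nat)
  (G : 'M[F]_(k, n)) (G' : 'M[F]_(k', n'))
  (HC : is_code d G) (HC' : is_code d' G')
  (x e : 'M[F]_(n, n'))
  (Hx : in_product_code G G' x)
  (Hw : (2 * (\sum_(j < n') minn (wt (colv e j)) d) < d * d')%N) :
  let y := x + e in
  let alpha := fun j : 'I_n' => rel_weight G d (colv y j) in
  let IE := err_set G d x y in
  let xhat := dec_mx G d y in
  (\sum_(j < n' | j \notin IE) alpha j - \sum_(j in IE) alpha j
     > n'%:Q - d'%:Q)
  /\ (forall i : 'I_n,
        \sum_(j < n') alpha j * (-1) ^+ (xhat i j != x i j)
          > n'%:Q - d'%:Q).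
Proof.
move=> y alpha IE xhat.
have [/forallP Gx _] := andP Hx.
have y_col j : colv y j = colv x j + colv e j by apply/rowP => i; rewrite !mxE.
pose signed j := if j \in IE then - alpha j else alpha j.
have signed_gt : n'%:Q - d'%:Q < \sum_j signed j.
  have := sum_reliability_gt Hw; rewrite card_ord => /lt_le_trans; apply.
  apply: ler_sum => j _; rewrite /signed /alpha /IE inE y_col.
  exact: reliability_le_signed_rel_weight (Gx j).
split.
  rewrite (bigID (mem IE)) /= addrC in signed_gt.
  rewrite -sumrN; congr (_ < _ + _): signed_gt; apply: eq_bigr => j.
    by rewrite /signed => /negbTE ->.
  by rewrite /signed => ->.
move=> i; apply: lt_le_trans signed_gt _; apply: ler_sum => j _.
rewrite /signed; case: ifPn => [_ | j_ok].
  have : 0 <= alpha j by exact: rel_weight_ge0.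
  by case: (_ != _); rewrite ?expr1 ?expr0 ?mulrN1 ?mulr1; lra.
have -> : xhat i j = x i j.
  move: j_ok; rewrite inE => /(@dec_col_correct _ _ _ d G) dec_ok.
  by rewrite mxE dec_ok !mxE.
by rewrite eqxx mulr1.
Qed.
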